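(* Let $G$ be a finite group. Then $G$ is nested if and only if $K(G/N)>1$ for every proper normal subgroup $N$ of $G$.
   Context: All groups are finite. For $\chi\in\mathrm{Irr}(G)$, the center of $\chi$ is $Z(\chi)=\{g\in G : |\chi(g)|=\chi(1)\}$; equivalently $Z(\chi)/\ker(\chi)=Z(G/\ker(\chi))$. A group $G$ is nested if for all $\chi,\psi\in\mathrm{Irr}(G)$ either $Z(\chi)\le Z(\psi)$ or $Z(\psi)\le Z(\chi)$. For a nonabelian group $H$, let $\mathcal{X}_H=\{\chi\in\mathrm{Irr}(H) : Z(\chi)>Z(H)\}$ (strict containment) and define $K(H)=\bigcap_{\chi\in\mathcal{X}_H}\ker(\chi)$; if $H$ is abelian, set $K(H)=H$. Here $K(G/N)$ is this subgroup computed in the group $H=G/N$. *)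

From HB Require Import structures.
From mathcomp Require Import all_boot all_order all_algebra all_fingroup all_solvable all_field all_character.
Set Implicit Arguments. Unset Strict Implicit. Unset Printing Implicit Defensive.
Import GRing.Theory Num.Theory.

Local Open Scope group_scope.

Definition nested (gT : finGroupType) (G : {group gT}) : Prop :=
  forall i j : Iirr G,
    ('Z(('chi[G]_i)%R)%CF \subset 'Z(('chi[G]_j)%R)%CF) || ('Z(('chi[G]_j)%R)%CF \subset 'Z(('chi[G]_i)%R)%CF).

(* The outer
   intersection with H only fixes the empty-intersection convention. *)
Definition Ksub (rT : finGroupType) (H : {group rT}) : {set rT} :=
  if abelian H then H
  else H :&: \bigcap_(i : Iirr H | 'Z(H) \proper 'Z(('chi[H]_i)%R)%CF) cfker ('chi[H]_i)%R.

From mathcomp Require Import all_boot all_order all_algebra all_fingroup all_solvable all_field all_character.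
Set Implicit Arguments. Unset Strict Implicit. Unset Printing Implicit Defensive.
Import GRing.Theory Num.Theory.
Local Open Scope ring_scope.
Local Open Scope group_scope.

(* Inflation from G/N to G preserves the inclusions between centers of
   irreducible characters, so quotients of nested groups are nested.  In a
   nested nonabelian group H the centers Z(chi) > Z(H) have a least member
   Z(chi0); since Z(chi)/ker(chi) is central in H/ker(chi), [Z(chi0), H] lies
   in every such ker(chi), hence in K(H), and K(H) = 1 would put Z(chi0) in
   Z(H).  Conversely, if Z(chi_i) and Z(chi_j) are incomparable then both
   characters, seen in G/N with N = ker(chi_i) /\ ker(chi_j), have centers
   strictly above Z(G/N), so K(G/N) <= (ker(chi_i) /\ ker(chi_j))/N = 1. *)

Section CenterOfInflation.

Variables (gT : finGroupType) (G N : {group gT}).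
Hypothesis nsNG : N <| G.

Lemma mod_Iirr_cfcenterE (i : Iirr (G / N)) x : x \in G ->
  (x \in 'Z('chi_(mod_Iirr i))%CF) = (coset N x \in 'Z('chi[G / N]_i)%CF).
Proof.
move=> Gx.
by rewrite !irr_cfcenterE ?mem_quotient // mod_IirrE // cfModE // cfMod1.
Qed.

Lemma mod_Iirr_cfcenter_subset (i j : Iirr (G / N)) :
  ('Z('chi_(mod_Iirr i))%CF \subset 'Z('chi_(mod_Iirr j))%CF)
  = ('Z('chi[G / N]_i)%CF \subset 'Z('chi[G / N]_j)%CF).
Proof.
apply/subsetP/subsetP => sZij y Zy.
  have /morphimP[x _ Gx Dy] := subsetP (cfcenter_sub _) _ Zy.
  by rewrite Dy -mod_Iirr_cfcenterE // sZij // mod_Iirr_cfcenterE -?Dy.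
have Gy := subsetP (cfcenter_sub _) _ Zy.
by rewrite mod_Iirr_cfcenterE // sZij // -mod_Iirr_cfcenterE.
Qed.

Lemma nested_quotient : nested G -> nested (G / N)%G.
Proof. by move=> nestG i j; rewrite -!mod_Iirr_cfcenter_subset. Qed.

End CenterOfInflation.

Section CharacterCenters.

Variables (rT : finGroupType) (H : {group rT}).

Lemma center_sub_cfcenter (i : Iirr H) : 'Z(H) \subset 'Z('chi[H]_i)%CF.
Proof. by rewrite -cap_cfcenter_irr; apply: bigcap_inf. Qed.

Lemma cfcenter_proper_center (i j : Iirr H) :
  ~~ ('Z('chi_i)%CF \subset 'Z('chi_j)%CF) -> 'Z(H) \proper 'Z('chi[H]_i)%CF.
Proof.
move=> not_sZij; rewrite properE center_sub_cfcenter.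
by apply: contra not_sZij => /subset_trans; apply; apply: center_sub_cfcenter.
Qed.

Lemma commg_cfcenter_cfker (i : Iirr H) :
  [~: 'Z('chi_i)%CF, H] \subset cfker 'chi[H]_i.
Proof.
have nKH := normal_norm (cfker_normal 'chi[H]_i).
rewrite -quotient_cents2 ?(subset_trans (cfcenter_sub _)) //.
exact: subset_trans (cfcenter_subset_center _) (subsetIr _ _).
Qed.

Lemma Ksub_sub_cfker (i : Iirr H) :
  'Z(H) \proper 'Z('chi_i)%CF -> Ksub H \subset cfker 'chi[H]_i.
Proof.
rewrite /Ksub; case: ifP => [/center_idP-> | _ ltZi].
  by rewrite properE cfcenter_sub andbF.
by apply: subset_trans (subsetIr _ _) _; apply: bigcap_inf.
Qed.

Lemma commg_cfcenter_Ksub (i : Iirr H) :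
  (forall j : Iirr H, 'Z(H) \proper 'Z('chi_j)%CF ->
     'Z('chi_i)%CF \subset 'Z('chi_j)%CF) ->
  [~: 'Z('chi_i)%CF, H] \subset Ksub H.
Proof.
move=> minZi; rewrite /Ksub; case: ifP => _.
  by rewrite commg_subr (subset_trans (cfcenter_sub _)) ?normG.
rewrite subsetI commg_subr (subset_trans (cfcenter_sub _)) ?normG //=.
apply/bigcapsP=> j ltZj; apply: subset_trans (commg_cfcenter_cfker j).
by rewrite commSg // minZi.
Qed.

Lemma nested_least_cfcenter (i0 : Iirr H) :
  nested H -> 'Z(H) \proper 'Z('chi_i0)%CF ->
  exists2 i : Iirr H, 'Z(H) \proper 'Z('chi_i)%CF &
    forall j : Iirr H, 'Z(H) \proper 'Z('chi_j)%CF ->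
      'Z('chi_i)%CF \subset 'Z('chi_j)%CF.
Proof.
move=> nestH ltZi0.
have [i ltZi minZi] :=
  @arg_minnP _ _ [pred i : Iirr H | 'Z(H) \proper 'Z('chi_i)%CF]
    (fun i => #|'Z('chi[H]_i)%CF|) ltZi0.
exists i => // j ltZj; case/orP: (nestH i j) => // sZji.
by have /eqP <- : 'Z('chi_j)%CF == 'Z('chi_i)%CF by rewrite eqEcard sZji minZi.
Qed.

Lemma nested_Ksub_neq1 : nested H -> H :!=: 1 -> Ksub H != 1.
Proof.
move=> nestH ntH; have [abH | nabH] := boolP (abelian H); first by rewrite /Ksub abH.
have [i0 ltZi0 | noX] := pickP [pred i : Iirr H | 'Z(H) \proper 'Z('chi_i)%CF].
  have [i ltZi minZi] := nested_least_cfcenter nestH ltZi0.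
  apply: contraTneq ltZi => K1.
  suff sZiZ : 'Z('chi_i)%CF \subset 'Z(H) by rewrite properE sZiZ andbF.
  rewrite subsetI cfcenter_sub; apply/commG1P/trivgP.
  by rewrite -K1 commg_cfcenter_Ksub.
apply: contraNneq ntH => K1; rewrite -subG1 -K1 /Ksub (negbTE nabH) subsetI subxx.
by apply/bigcapsP=> i ltZi; have := noX i; rewrite /= ltZi.
Qed.

Lemma Ksub_sub_cfkerI (i j : Iirr H) :
  ~~ ('Z('chi_i)%CF \subset 'Z('chi_j)%CF) ->
  ~~ ('Z('chi_j)%CF \subset 'Z('chi_i)%CF) ->
  Ksub H \subset cfker 'chi[H]_i :&: cfker 'chi[H]_j.
Proof.
move=> not_sZij not_sZji.
by rewrite subsetI !Ksub_sub_cfker // (cfcenter_proper_center not_sZij,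
  cfcenter_proper_center not_sZji).
Qed.

End CharacterCenters.

Lemma incomparable_cfcenter_Ksub_quotient (gT : finGroupType) (G : {group gT}) (i j : Iirr G) :
  ~~ ('Z('chi_i)%CF \subset 'Z('chi_j)%CF) ->
  ~~ ('Z('chi_j)%CF \subset 'Z('chi_i)%CF) ->
  exists2 N : {group gT}, N <| G /\ N \proper G & Ksub (G / N)%G = 1.
Proof.
move=> not_sZij not_sZji.
pose N := (cfker_group 'chi[G]_i :&: cfker_group 'chi[G]_j)%G.
have nsNG : N <| G by rewrite normalI ?cfker_normal.
have sNi : N \subset cfker 'chi_i by apply: subsetIl.
have sNj : N \subset cfker 'chi_j by apply: subsetIr.
exists N; first split=> //.
  rewrite properE normal_sub //=; apply: contra not_sZji => sGN.
  have sKZi : cfker 'chi_i \subset 'Z('chi_i)%CF.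
    exact: normal_sub (cfker_center_normal _).
  exact: subset_trans (cfcenter_sub _) (subset_trans sGN (subset_trans sNi sKZi)).
pose i' := quo_Iirr N i; pose j' := quo_Iirr N j.
have [Ei Ej] : mod_Iirr i' = i /\ mod_Iirr j' = j.
  by split; apply: quo_IirrK.
have not_sZij' : ~~ ('Z('chi_i')%CF \subset 'Z('chi_j')%CF).
  by rewrite -mod_Iirr_cfcenter_subset // Ei Ej.
have not_sZji' : ~~ ('Z('chi_j')%CF \subset 'Z('chi_i')%CF).
  by rewrite -mod_Iirr_cfcenter_subset // Ei Ej.
apply/trivgP; apply: subset_trans (Ksub_sub_cfkerI not_sZij' not_sZji') _.
by rewrite !quo_IirrE // !cfker_quo // -quotientGI // trivg_quotient.
Qed.

Theorem theoremD (gT : finGroupType) (G : {group gT}) :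
  nested G <->
  (forall N : {group gT}, N <| G -> N \proper G ->
     Ksub (G / N)%G != 1%g).
Proof.
split=> [nestG N nsNG ltNG | KG i j].
  apply: nested_Ksub_neq1; first exact: nested_quotient.
  by rewrite -subG1 quotient_sub1 ?normal_norm // proper_subn.
apply/negPn/negP => /norP[not_sZij not_sZji].
have [N [nsNG ltNG] K1] := incomparable_cfcenter_Ksub_quotient not_sZij not_sZji.
by have /eqP := KG N nsNG ltNG.
Qed.
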